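(* Let $\epsilon>0$, $\delta\in(0,1)$, $x>0$, and let $\mathcal{R}$ consist of $M=\frac{48x}{\epsilon^2}\ln\frac{2n}{\delta}$ independently generated random RR sets. If $I_{max}\ge xn$, then with probability at least $1-\delta_1$, $\mathcal{F_R}^*\ge x-\epsilon$, where $\delta_1=\left(\frac{\delta}{2n}\right)^{24}$.
   Context: $G=\langle V,E,w\rangle$ is a network with $n=|V|$ under the Linear Threshold or Independent Cascade model (live-edge form: LT — each node $v$ independently selects at most one incoming live edge, $(u,v)$ with probability $w_{uv}/W_v$ where $W_v=w_v+\sum_u w_{uv}$ includes a self-weight $w_v$; IC — each edge $(u,v)$ live independently with probability $w_{uv}$). $I_u$ is the expected number of nodes reachable from $u$ via live edges and $I_{max}=\max_u I_u$. A random RR set is the set of nodes that can reach a uniformly random node $v\in V$ via live edges in a freshly sampled live-edge graph. $\mathcal{F_R}(u)$ is the fraction of RR sets in $\mathcal{R}$ containing $u$, and $\mathcal{F_R}^*=\max_{u\in V}\mathcal{F_R}(u)$. *)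

From HB Require Import structures.
From mathcomp Require Import all_boot all_order all_algebra.
From mathcomp Require Import reals exp.
Set Implicit Arguments. Unset Strict Implicit. Unset Printing Implicit Defensive.
Import Order.TTheory GRing.Theory Num.Theory.
Local Open Scope ring_scope.

Inductive diffusion_model := LT | IC.

Section Defs.
Variables (R : realType) (V : finType).

Definition live_graph := {set (V * V)}.

Definition reach (L : live_graph) (u v : V) : bool :=
  connect (fun a b => (a, b) \in L) u v.

(* Network weights: w u v = w_{uv} (0 when (u,v) is not an edge),
   ws v = self weight w_v (only used by LT). *)
Definition Wtot (w : V -> V -> R) (ws : V -> R) (v : V) : R :=
  ws v + \sum_(u : V) w u v.

Definition valid_weights (m : diffusion_model) (w : V -> V -> R) (ws : V -> R)
  : Prop :=
  match m with
  | IC => forall u v, 0 <= w u v <= 1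
  | LT => (forall u v, 0 <= w u v) /\ (forall v, 0 <= ws v) /\
          (forall v, 0 < Wtot w ws v)
  end.

(* LT: each node v independently selects at most one incoming live edge,
   (u,v) with probability w_uv / W_v, none with probability w_v / W_v. *)
Definition lt_prob (w : V -> V -> R) (ws : V -> R) (L : live_graph) : R :=
  \prod_(v : V)
    (let S := [set u | (u, v) \in L] in
     if #|S| == 0%N then ws v / Wtot w ws v
     else if #|S| == 1%N then (\sum_(u in S) w u v) / Wtot w ws v
     else 0).

Definition ic_prob (w : V -> V -> R) (L : live_graph) : R :=
  \prod_(e : V * V) (if e \in L then w e.1 e.2 else 1 - w e.1 e.2).

Definition live_prob (m : diffusion_model) (w : V -> V -> R) (ws : V -> R)
  (L : live_graph) : R :=
  match m with LT => lt_prob w ws L | IC => ic_prob w L end.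

Definition influence m w ws (u : V) : R :=
  \sum_(L : live_graph) live_prob m w ws L * #|[set v | reach L u v]|%:R.

(* I_max = max_u I_u (all I_u >= 0, so 0 is a neutral start). *)
Definition Imax m w ws : R := \big[Num.max/0]_(u : V) influence m w ws u.

(* One RR-set sample: a live-edge graph L and a root v; the RR set is
   [set u | reach L u v].  Its probability: P(L) * 1/n. *)
Definition rr_sample := (live_graph * V)%type.

Definition rr_prob m w ws (s : rr_sample) : R :=
  live_prob m w ws s.1 / #|V|%:R.

Definition rr_family_prob m w ws (M : nat) (om : {ffun 'I_M -> rr_sample}) : R :=
  \prod_(i < M) rr_prob m w ws (om i).

Definition frac (M : nat) (om : {ffun 'I_M -> rr_sample}) (u : V) : R :=
  #|[set i : 'I_M | reach (om i).1 u (om i).2]|%:R / M%:R.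

Definition frac_max (M : nat) (om : {ffun 'I_M -> rr_sample}) : R :=
  \big[Num.max/0]_(u : V) frac om u.

Definition rr_Pr m w ws (M : nat) (E : pred {ffun 'I_M -> rr_sample}) : R :=
  \sum_(om | E om) rr_family_prob m w ws om.

End Defs.

(** The node u maximising I_u lies in a random RR set with probability
    q = I_u / n >= x, so the number K of RR sets containing u is a sum of M
    independent Bernoulli(q) variables and F_R^* >= K / M.  The Chernoff
    lower-tail bound, obtained from Markov's inequality applied to
    exp(lambda (M (x - eps) - K)) with lambda = eps / x, gives
    Pr[K < M (x - eps)] <= exp(- M eps^2 / (2 x)), and the choice of M makes
    the exponent at most -24 ln(2n / delta). *)
From HB Require Import structures.
From mathcomp Require Import all_boot all_order all_algebra.
From mathcomp Require Import boolp reals exp sequences ring lra.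
Set Implicit Arguments. Unset Strict Implicit. Unset Printing Implicit Defensive.
Import Order.TTheory GRing.Theory Num.Theory.
Local Open Scope ring_scope.

Lemma expR_ge_cubic (R : realType) (x : R) : 0 <= x ->
  1 + x + x ^+ 2 / 2 + x ^+ 3 / 6 <= expR x.
Proof.
move=> x0.
have := nondecreasing_cvgn_le
  (nondecreasing_series (fun n _ _ => exp_coeff_ge0 n x0))
  (is_cvg_series_exp_coeff x) 4.
apply: le_trans.
rewrite /series /= /exp_coeff /= !big_nat_recr //= big_geq //.
by rewrite !factS fact0 expr0 expr1 !divr1 add0r.
Qed.

Lemma expRN_le_quadratic (R : realType) (l : R) : 0 <= l ->
  expR (- l) <= 1 - l + l ^+ 2 / 2.
Proof.
move=> l0.
have q_gt0 : 0 < 1 - l + l ^+ 2 / 2 by nra.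
rewrite expRN -(@ler_pM2l _ (expR l)) ?expR_gt0 // mulfV ?gt_eqF ?expR_gt0 //.
apply: le_trans (_ : (1 + l + l ^+ 2 / 2 + l ^+ 3 / 6) * (1 - l + l ^+ 2 / 2) <= _).
  nra.
by rewrite ler_pM2r // expR_ge_cubic.
Qed.

Lemma sum_ffun_prod (R : comPzSemiRingType) (I S : finType) (f : S -> R) :
  \sum_(om : {ffun I -> S}) \prod_i f (om i) = (\sum_s f s) ^+ #|I|.
Proof. by rewrite -(bigA_distr_bigA (fun _ s => f s)) prodr_const. Qed.

Section ProductChernoff.
Variables (R : realType) (S : finType) (p : S -> R) (b : pred S).
Hypotheses (p_ge0 : forall s, 0 <= p s) (p_sum1 : \sum_s p s = 1).

Let mean := \sum_s p s * (b s)%:R.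

Lemma sum_prod_exp_hits (M : nat) (t : R) :
  \sum_(om : {ffun 'I_M -> S}) \prod_i p (om i) * t ^+ #|[set i | b (om i)]|
  = (\sum_s p s * (if b s then t else 1)) ^+ M.
Proof.
rewrite -[M in RHS]card_ord -sum_ffun_prod; apply: eq_bigr => om _.
by rewrite big_split /= -big_mkcond /= prodr_const cardsE.
Qed.

Lemma sum_exp_hits_le (t : R) : 0 <= t ->
  0 <= \sum_s p s * (if b s then t else 1) <= expR (- ((1 - t) * mean)).
Proof.
move=> t0; apply/andP; split.
  by apply: sumr_ge0 => s _; rewrite mulr_ge0 //; case: (b s).
apply: le_trans (expR_ge1Dx _).
rewrite mulr_sumr -[X in X - _]p_sum1 -sumrB ler_sum // => s _.
by case: (b s) => /=; lra.
Qed.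

Lemma chernoff_lower_tail (M : nat) (x eps : R) (E : pred {ffun 'I_M -> S}) :
  0 < x -> 0 < eps -> x <= mean ->
  (forall om, E om -> #|[set i | b (om i)]|%:R < M%:R * (x - eps)) ->
  \sum_(om | E om) \prod_i p (om i) <= expR (- (M%:R * eps ^+ 2 / (2 * x))).
Proof.
move=> x0 eps0 x_le_mean E_low.
set lam := eps / x; set t := expR (- lam).
have lam0 : 0 < lam by rewrite divr_gt0.
have t0 : 0 <= t by rewrite expR_ge0.
have t1 : t <= 1 by rewrite expR_le1 oppr_le0 ltW.
have tq : lam - lam ^+ 2 / 2 <= 1 - t.
  by have := expRN_le_quadratic (ltW lam0); rewrite -/t; lra.
set c := M%:R * (x - eps).
have markov : \sum_(om | E om) \prod_i p (om i)
    <= expR (lam * c) *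
       \sum_(om : {ffun 'I_M -> S}) \prod_i p (om i) * t ^+ #|[set i | b (om i)]|.
  rewrite mulr_sumr big_mkcond ler_sum // => om _.
  have P0 : 0 <= \prod_i p (om i) by exact: prodr_ge0.
  case: ifP => [/E_low K_low|_]; last by rewrite !mulr_ge0 ?exprn_ge0 ?expR_ge0.
  rewrite mulrCA -expRM_natl -expRD -[leLHS]mulr1 ler_wpM2l //.
  apply: le_trans (expR_ge1Dx _); rewrite lerDl mulrN mulrC -mulrBl.
  by apply: mulr_ge0; rewrite ?subr_ge0 ltW.
apply: (le_trans markov); rewrite sum_prod_exp_hits.
have /andP[B0 B1] := sum_exp_hits_le t0.
apply: le_trans (_ : expR (lam * c) * expR (- ((1 - t) * mean)) ^+ M <= _).
  by rewrite ler_wpM2l ?expR_ge0 // lerXn2r ?nnegrE ?expR_ge0.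
rewrite -expRM_natl -expRD ler_expR.
have -> : M%:R * eps ^+ 2 / (2 * x) = M%:R * (x * lam ^+ 2) / 2.
  by rewrite /lam; field; rewrite gt_eqF.
have -> : lam * c = M%:R * (x * lam) - M%:R * (x * lam) * lam.
  by rewrite /c /lam; field; rewrite gt_eqF.
have : x * (lam - lam ^+ 2 / 2) <= (1 - t) * mean.
  apply: le_trans (_ : (1 - t) * x <= _); first by rewrite mulrC ler_wpM2r // ltW.
  by rewrite ler_wpM2l // subr_ge0.
move=> /(@ler_wpM2l _ M%:R (ler0n _ _)); lra.
Qed.

End ProductChernoff.

Lemma sum_set_prod_if (R : comPzSemiRingType) (T : finType) (f g : T -> R) :
  \sum_(A : {set T}) \prod_e (if e \in A then f e else g e) = \prod_e (f e + g e).
Proof.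
rewrite (reindex (fun h : {ffun T -> bool} => [set e | h e])); last first.
  exists (fun A : {set T} => [ffun e => e \in A]) => [h _|A _].
    by apply/ffunP => e; rewrite ffunE inE.
  by apply/setP => e; rewrite inE ffunE.
transitivity (\prod_e \sum_(c : bool) (if c then f e else g e)).
  by rewrite bigA_distr_bigA; apply: eq_bigr => h _; apply: eq_bigr => e _; rewrite inE.
by apply: eq_bigr => e _; rewrite big_bool.
Qed.

Lemma sum_set_card_le1 (R : nmodType) (T : finType) (c : R) (f : T -> R) :
  \sum_(A : {set T})
     (if #|A| == 0%N then c else if #|A| == 1%N then \sum_(u in A) f u else 0)
  = c + \sum_u f u.
Proof.
transitivity (\sum_(A : {set T}) ((if A == set0 then c else 0)
    + \sum_u (if A == [set u] then f u else 0))).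
  apply: eq_bigr => A _.
  have [->|A0] := eqVneq A set0.
    rewrite cards0 /= big1 ?addr0 // => u _.
    by rewrite eq_sym -cards_eq0 cards1.
  rewrite cards_eq0 (negbTE A0) add0r.
  have [[u0 ->]|A1] := @cards1P T A.
    rewrite big_set1; under eq_bigr do rewrite (inj_eq set1_inj) eq_sym.
    by rewrite -big_mkcond big_pred1_eq.
  by rewrite big1 // => u _; case: eqP => // AE; case: A1; exists u.
rewrite big_split /= -big_mkcond big_pred1_eq exchange_big /=; congr (_ + _).
by apply: eq_bigr => u _; rewrite -big_mkcond big_pred1_eq.
Qed.

Section RRSets.
Variables (R : realType) (V : finType) (w : V -> V -> R) (ws : V -> R).

Lemma sum_lt_prob : valid_weights LT w ws -> \sum_L lt_prob w ws L = 1.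
Proof.
move=> [_ [_ W_gt0]].
pose in_edges (F : {ffun V -> {set V}}) : live_graph V :=
  [set e | e.1 \in F e.2].
pose node_factor v (A : {set V}) := if #|A| == 0%N then ws v / Wtot w ws v
  else if #|A| == 1%N then \sum_(u in A) w u v / Wtot w ws v else 0.
rewrite /lt_prob (reindex in_edges); last first.
  exists (fun L : live_graph V => [ffun v => [set u | (u, v) \in L]]).
    by move=> F _; apply/ffunP => v; apply/setP => u; rewrite ffunE !inE.
  by move=> L _; apply/setP => -[u v]; rewrite !inE ffunE inE.
transitivity (\sum_(F : {ffun V -> {set V}}) \prod_v node_factor v (F v)).
  apply: eq_bigr => F _; apply: eq_bigr => v _ /=.
  have -> : [set u | (u, v) \in in_edges F] = F v by apply/setP => u; rewrite !inE.
  by rewrite /node_factor mulr_suml.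
rewrite -bigA_distr_bigA /=; apply: big1 => v _.
rewrite sum_set_card_le1 -mulr_suml -mulrDl.
by rewrite mulfV // gt_eqF // W_gt0.
Qed.

Lemma sum_ic_prob : \sum_L ic_prob w L = 1.
Proof.
rewrite /ic_prob (sum_set_prod_if (fun e => w e.1 e.2) (fun e => 1 - w e.1 e.2)).
by rewrite big1 // => e _; rewrite subrKC.
Qed.

Lemma hits_lt_of_frac_max_lt (M : nat) (om : {ffun 'I_M -> rr_sample V}) u a :
  (0 < M)%N -> frac_max R om < a ->
  #|[set i | reach (om i).1 u (om i).2]|%:R < M%:R * a.
Proof.
move=> M_gt0 /(le_lt_trans (le_bigmax _ _ u)).
by rewrite /frac ltr_pdivrMr ?ltr0n // mulrC.
Qed.

Variable m : diffusion_model.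
Hypothesis valid : valid_weights m w ws.

Lemma live_prob_ge0 (L : live_graph V) : 0 <= live_prob m w ws L.
Proof.
case: m valid => [[w_ge0 [ws_ge0 W_gt0]]|w01] /=; apply: prodr_ge0.
  move=> v _ /=; case: ifP => _; first by rewrite divr_ge0 // ltW.
  by case: ifP => _ //; rewrite divr_ge0 ?sumr_ge0 // ltW.
by move=> e _; have /andP[? ?] := w01 e.1 e.2; case: ifP => _; rewrite ?subr_ge0.
Qed.

Lemma sum_live_prob : \sum_L live_prob m w ws L = 1.
Proof. by case: m valid => /= [/sum_lt_prob|_ ]; last exact: sum_ic_prob. Qed.

Hypothesis V_gt0 : (0 < #|V|)%N.

Lemma rr_prob_ge0 (s : rr_sample V) : 0 <= rr_prob m w ws s.
Proof. by rewrite divr_ge0 ?live_prob_ge0. Qed.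

Lemma sum_rr_prob : \sum_s rr_prob m w ws s = 1.
Proof.
rewrite -(pair_bigA _ (fun L v => rr_prob m w ws (L, v))) -[RHS]sum_live_prob.
apply: eq_bigr => L _.
by rewrite /rr_prob /= sumr_const -[_ *+ _]mulr_natr divfK // pnatr_eq0 -lt0n.
Qed.

Lemma sum_rr_prob_reach (u : V) :
  \sum_s rr_prob m w ws s * (reach s.1 u s.2)%:R = influence m w ws u / #|V|%:R.
Proof.
rewrite -(pair_bigA _ (fun L v => rr_prob m w ws (L, v) * (reach L u v)%:R)).
rewrite /influence mulr_suml; apply: eq_bigr => L _.
rewrite /rr_prob /= -mulr_sumr mulrAC; congr (_ * _ / _).
rewrite -sum1_card !natr_sum [RHS]big_mkcond /=.
by apply: eq_bigr => v _; rewrite inE; case: reach.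
Qed.

End RRSets.

Lemma chernoff_exponent_le (R : realType) (x eps y : R) (M : nat) :
  0 < x -> 0 < eps -> 0 < y ->
  48 * x / eps ^+ 2 * ln y^-1 <= M%:R ->
  expR (- (M%:R * eps ^+ 2 / (2 * x))) <= y ^+ 24.
Proof.
move=> x_gt0 eps_gt0 y_gt0 M_ge.
have -> : y ^+ 24 = expR (- (24%:R * ln y^-1)).
  by rewrite lnV ?posrE // mulrN opprK expRM_natl lnK ?posrE.
rewrite ler_expR lerN2 ler_pdivlMr ?mulr_gt0 //.
have -> : 24%:R * ln y^-1 * (2 * x) = 48 * x / eps ^+ 2 * ln y^-1 * eps ^+ 2.
  by field; rewrite gt_eqF ?exprn_gt0.
by rewrite ler_pM2r ?exprn_gt0.
Qed.

Theorem lemma6p4 (R : realType) (V : finType) (m : diffusion_model)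
  (w : V -> V -> R) (ws : V -> R) (eps delta x : R) (M : nat) :
  (0 < #|V|)%N ->
  valid_weights m w ws ->
  0 < eps -> 0 < delta < 1 -> 0 < x ->
  M = `|Num.ceil (48 * x / eps ^+ 2 * ln (2 * #|V|%:R / delta))|%N ->
  x * #|V|%:R <= Imax m w ws ->
  rr_Pr m w ws (fun om : {ffun 'I_M -> rr_sample V} => x - eps <= @frac_max R V M om)
    >= 1 - (delta / (2 * #|V|%:R)) ^+ 24.
Proof.
move=> V_gt0 valid eps_gt0 /andP[delta_gt0 delta_lt1] x_gt0 M_def Imax_ge.
set n : R := #|V|%:R; set y := delta / (2 * n).
have n_ge1 : 1 <= n by rewrite ler1n.
have y_gt0 : 0 < y by rewrite divr_gt0 // mulr_gt0 // ltr0n.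
have M_ge : 48 * x / eps ^+ 2 * ln y^-1 <= M%:R.
  by rewrite invf_div M_def natr_absz intr_norm (le_trans (ceil_ge _)) ?ler_norm.
have M_gt0 : (0 < M)%N.
  rewrite -(ltr0n R); apply: lt_le_trans M_ge; rewrite !mulr_gt0 ?invr_gt0 ?exprn_gt0 // ln_gt0 //.
  by rewrite invf_div ltr_pdivlMr // mul1r; lra.
have [u _ Iu] : exists2 u, true & x * n <= influence m w ws u.
  by case/bigmax_geP: Imax_ge => //; rewrite leNgt mulr_gt0 // ltr0n.
have x_le_mean : x <= \sum_s rr_prob m w ws s * (reach s.1 u s.2)%:R.
  by rewrite sum_rr_prob_reach // ler_pdivlMr // ltr0n.
set good := fun om : {ffun 'I_M -> rr_sample V} => x - eps <= @frac_max R V M om.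
have bad_hits_low om : ~~ good om ->
    #|[set i | reach (om i).1 u (om i).2]|%:R < M%:R * (x - eps).
  by rewrite -ltNge; apply: hits_lt_of_frac_max_lt.
have bad_le := chernoff_lower_tail (rr_prob_ge0 valid) (sum_rr_prob valid V_gt0)
  x_gt0 eps_gt0 x_le_mean bad_hits_low.
have total : \sum_(om : {ffun 'I_M -> rr_sample V}) rr_family_prob m w ws om = 1.
  by rewrite /rr_family_prob sum_ffun_prod sum_rr_prob // expr1n.
rewrite (bigID good) /= /rr_family_prob in total.
rewrite /rr_Pr /rr_family_prob (canRL (addrK _) total) lerD2l lerN2.
exact: le_trans bad_le (chernoff_exponent_le x_gt0 eps_gt0 y_gt0 M_ge).
Qed.
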